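(* Both sequences $(S_m)_{m\ge0}$ and $(P_m)_{m\ge0}$ are log-convex, i.e. for each of them $a_m\ge0$ for all $m\ge0$ and $a_{m-1}a_{m+1}\ge a_m^2$ for all $m\ge1$.
   Context: $(S_n)_{n\ge0}$ is the integer sequence defined by $S_0=1$, $S_1=4$ and $(n+1)^2S_{n+1}=4(3n^2+3n+1)S_n-32n^2S_{n-1}$ for $n\ge1$; equivalently $S_n=\sum_{k=0}^n\binom nk\binom{2k}k\binom{2n-2k}{n-k}$. The Catalan–Larcombe–French numbers are $P_n=2^nS_n$ (equivalently $P_0=1$, $P_1=8$, $(n+1)^2P_{n+1}=8(3n^2+3n+1)P_n-128n^2P_{n-1}$ for $n\ge1$). *)

From mathcomp Require Import all_boot.
Set Implicit Arguments. Unset Strict Implicit. Unset Printing Implicit Defensive.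

Definition S (n : nat) : nat :=
  \sum_(0 <= k < n.+1) 'C(n, k) * 'C(2 * k, k) * 'C(2 * n - 2 * k, n - k).

Definition P (n : nat) : nat := 2 ^ n * S n.

(* log-convexity of a nat-valued sequence (nonnegativity is automatic in nat,
   but kept explicit) *)
Definition log_convex (a : nat -> nat) : Prop :=
  (forall m, 0 <= a m) /\ (forall m, 1 <= m -> a m.-1 * a m.+1 >= a m ^ 2).

From mathcomp Require Import all_boot all_order all_algebra ring zify.
Import GRing.Theory Num.Theory.

Set Implicit Arguments.
Unset Strict Implicit.

(* Zeilberger's algorithm applied to the summand of S_n yields a rational
   certificate turning S_n into a telescoping sum; this gives the three-term
   recurrence (n+2)^2 S_{n+2} - 4(3n^2+9n+7) S_{n+1} + 32(n+1)^2 S_n = 0.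
   By induction the ratio S_{n+1}/S_n stays in the window [4, 8(n+1)/(n+2)],
   and on that window the recurrence expresses (n+2)^2 (S_n S_{n+2} - S_{n+1}^2)
   as a sum of nonnegative products.  Log-convexity of P_n = 2^n S_n follows
   because multiplying by a geometric sequence preserves it. *)

Lemma central_binS j : 'C(2 * j.+1, j.+1) * j.+1 = 2 * (2 * j + 1) * 'C(2 * j, j).
Proof.
have sym : 'C((2 * j).+1, j.+1) = 'C((2 * j).+1, j).
  rewrite -bin_sub; last lia.
  by rewrite (_ : (2 * j).+1 - j.+1 = j); last lia.
have e : 2 * j.+1 = (2 * j).+2 by lia.
rewrite e mulnC -mul_bin_diag /= -e -mulnA -sym -mul_bin_diag /=.
by rewrite addn1 mulnA.
Qed.

Definition term n k := 'C(n, k) * 'C(2 * k, k) * 'C(2 * (n - k), n - k).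

Lemma term_shift_k k j :
  term (k + j.+1) k.+1 * k.+1 ^ 2 * (2 * j + 1)
  = term (k + j.+1) k * j.+1 ^ 2 * (2 * k + 1).
Proof.
have e1 : k + j.+1 - k.+1 = j by lia.
have e2 : k + j.+1 - k = j.+1 by lia.
have shift_bin := mul_bin_left (k + j.+1) k; rewrite e2 in shift_bin.
rewrite /term e1 e2.
set C0 := 'C(_, k) in shift_bin *; set C1 := 'C(_, k.+1) in shift_bin *.
transitivity ((k.+1 * C1) * ('C(2 * k.+1, k.+1) * k.+1) * ('C(2 * j, j) * (2 * j + 1))).
  by ring.
rewrite shift_bin central_binS.
transitivity (C0 * 'C(2 * k, k) * ('C(2 * j.+1, j.+1) * j.+1) * (j.+1 * (2 * k + 1))).
  by rewrite central_binS; ring.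
by ring.
Qed.

Lemma term_shift_n k j :
  term (k + j) k * (2 * (k + j).+1 * (2 * j + 1)) = term (k + j).+1 k * j.+1 ^ 2.
Proof.
have e1 : k + j - k = j by lia.
have e2 : (k + j).+1 - k = j.+1 by lia.
have shift_bin := mul_bin_down (k + j).+1 k; rewrite e2 /= in shift_bin.
rewrite /term e1 e2.
set C0 := 'C(k + j, k) in shift_bin *; set C1 := 'C((k + j).+1, k) in shift_bin *.
transitivity (((k + j).+1 * C0) * 'C(2 * k, k) * (2 * (2 * j + 1) * 'C(2 * j, j))).
  by ring.
by rewrite shift_bin -central_binS; ring.
Qed.

Local Open Scope ring_scope.

Definition termQ n k : rat := (term n k)%:R.

Lemma termQ_small n k : (n < k)%N -> termQ n k = 0.
Proof. by move=> ltnk; rewrite /termQ /term bin_small. Qed.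

Lemma termQ_shift_k n k :
  termQ n k.+1 * k.+1%:R ^+ 2 * (2 * n%:R - 2 * k%:R - 1)
  = termQ n k * (n%:R - k%:R) ^+ 2 * (2 * k%:R + 1).
Proof.
have [ltkn|lenk] := ltnP k n.
  have [j ->] : exists j, n = (k + j.+1)%N by exists (n - k.+1)%N; lia.
  have := congr1 (fun x : nat => x%:R : rat) (term_shift_k k j).
  rewrite /termQ /= !(natrM, natrX, natrD) -!natr1 => shift.
  by apply: etrans (etrans shift _); ring.
rewrite termQ_small; last lia.
have [->|ltnk] := eqVneq k n; first by rewrite !subrr !mul0r mulr0 mul0r.
by rewrite termQ_small ?mul0r //; rewrite ltn_neqAle eq_sym ltnk lenk.
Qed.

Lemma termQ_shift_n n k :
  termQ n k * (2 * n.+1%:R * (2 * n%:R + 1 - 2 * k%:R))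
  = termQ n.+1 k * (n.+1%:R - k%:R) ^+ 2.
Proof.
have [lekn|ltnk] := leqP k n.
  have [j ->] : exists j, n = (k + j)%N by exists (n - k)%N; lia.
  have := congr1 (fun x : nat => x%:R : rat) (term_shift_n k j).
  rewrite /termQ /= !(natrM, natrX, natrD) -!natr1 => shift.
  by apply: etrans (etrans shift _); ring.
rewrite termQ_small ?mul0r //.
have [->|ltn1k] := eqVneq k n.+1; first by rewrite subrr expr0n /= !mulr0.
by rewrite termQ_small ?mul0r //; rewrite ltn_neqAle eq_sym ltn1k ltnk.
Qed.

Lemma odd_natr_neq0 a b : 2 * a%:R + 1 - 2 * b%:R != 0 :> rat.
Proof. by rewrite subr_eq0 -[2]/(2%:R) -!natrM natr1 eqr_nat; apply/eqP; lia. Qed.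

Lemma termQ_pred_n n k :
  termQ n k = termQ n.+1 k * (n.+1%:R - k%:R) ^+ 2
              / (2 * n.+1%:R * (2 * n%:R + 1 - 2 * k%:R)).
Proof. by rewrite -termQ_shift_n mulfK // !mulf_neq0 ?odd_natr_neq0 ?pnatr_eq0. Qed.

Lemma termQ_succ_k n k :
  termQ n k.+1 = termQ n k * (n%:R - k%:R) ^+ 2 * (2 * k%:R + 1)
                 / (k.+1%:R ^+ 2 * (2 * n%:R - 2 * k%:R - 1)).
Proof.
have odd : 2 * n%:R - 2 * k%:R - 1 != 0 :> rat.
  by rewrite -oppr_eq0 (_ : - _ = 2 * k%:R + 1 - 2 * n%:R :> rat) ?odd_natr_neq0 //; ring.
by rewrite -termQ_shift_k -(mulrA (termQ n k.+1)) mulfK // mulf_neq0 ?expf_neq0 ?pnatr_eq0.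
Qed.

(* The rational certificate found by Zeilberger's algorithm for the recurrence
   operator of [rec_telescope]. *)
Definition cert_ratio (n : nat) (x : rat) : rat :=
  let N := n%:R in
  x ^+ 2 * (- (2 * N + 1) ^+ 2 * (N + 2) + 2 * (2 * N + 1) * (2 * N + 3) * x
            - 4 * (N + 1) * x ^+ 2) / ((2 * N + 3 - 2 * x) * (2 * N + 1 - 2 * x)).

Definition cert n k := termQ n.+2 k * cert_ratio n k%:R.

Lemma rec_telescope n k :
  (n%:R + 2) * ((n%:R + 2) ^+ 2 * termQ n.+2 k
    - 4 * (3 * n%:R ^+ 2 + 9 * n%:R + 7) * termQ n.+1 k
    + 32 * (n%:R + 1) ^+ 2 * termQ n k) = cert n k.+1 - cert n k.
Proof.
set N : rat := n%:R; set K : rat := k%:R.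
have eN1 : n.+1%:R = N + 1 by rewrite -natr1.
have eN2 : n.+2%:R = N + 2 by rewrite -natr1 eN1 -addrA.
have eK1 : k.+1%:R = K + 1 by rewrite -natr1.
have odd1 : 2 * N + 1 - 2 * K != 0 := odd_natr_neq0 n k.
have odd1' : 2 * N + 1 - 2 * (K + 1) != 0 by rewrite -eK1 odd_natr_neq0.
have odd3 : 2 * N + 3 - 2 * K != 0.
  by rewrite (_ : 2 * N + 3 = 2 * n.+1%:R + 1) ?odd_natr_neq0 // eN1; ring.
rewrite /cert /cert_ratio termQ_succ_k (termQ_pred_n n) (termQ_pred_n n.+1).
rewrite eN1 eN2 eK1 -/N -/K.
by field; rewrite -/N -/K odd1 odd3 odd1' -eK1 -eN1 -eN2 !pnatr_eq0.
Qed.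

Lemma S_natr_sum n m : (n <= m)%N -> (S n)%:R = \sum_(0 <= k < m.+1) termQ n k.
Proof.
move=> /subnKC <-; elim: (m - n)%N => [|d IH].
  rewrite addn0 -natr_sum; congr _%:R.
  by apply: eq_bigr => k _; rewrite /term mulnBr.
by rewrite addnS big_nat_recr //= -IH termQ_small ?addr0 //; lia.
Qed.

Lemma S_rec n :
  (n.+2 ^ 2 * S n.+2 + 32 * n.+1 ^ 2 * S n = 4 * (3 * n ^ 2 + 9 * n + 7) * S n.+1)%N.
Proof.
set N : rat := n%:R.
have telescoped : \sum_(0 <= k < n.+3) ((N + 2) * ((N + 2) ^+ 2 * termQ n.+2 k
    - 4 * (3 * N ^+ 2 + 9 * N + 7) * termQ n.+1 k
    + 32 * (N + 1) ^+ 2 * termQ n k)) = 0.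
  under eq_bigr do rewrite rec_telescope.
  by rewrite telescope_sumr // /cert termQ_small // /cert_ratio expr0n /= !mul0r mulr0 subrr.
rewrite -mulr_sumr 2!big_split /= sumrN -!mulr_sumr in telescoped.
rewrite -(@S_natr_sum n.+2 n.+2 (leqnn _)) -(@S_natr_sum n.+1 n.+2 (leqnSn _))
  -(@S_natr_sum n n.+2 (leqW (leqnSn _))) in telescoped.
have eN1 : n.+1%:R = N + 1 by rewrite -addn1 natrD.
have eN2 : n.+2%:R = N + 2 by rewrite -addn2 natrD.
move/eqP: telescoped; rewrite -eN2 mulf_eq0 pnatr_eq0 /= => /eqP rec.
apply/eqP; rewrite -(eqr_nat rat) -subr_eq0 -{}rec.
by apply/eqP; rewrite !(natrD, natrM, natrX) eN1 eN2 -/N; ring.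
Qed.

Local Close Scope ring_scope.

Section RecurrenceStep.
Variables n a b c : nat.
Hypothesis rec : n.+2 ^ 2 * c + 32 * n.+1 ^ 2 * a = 4 * (3 * n ^ 2 + 9 * n + 7) * b.
Hypothesis lower : 4 * a <= b.
Hypothesis upper : n.+2 * b <= 8 * n.+1 * a.

Lemma rec_step_lower : 4 * b <= c.
Proof. by rewrite -(@leq_pmul2l (n.+2 ^ 2)) ?expn_gt0 //; nia. Qed.

Lemma rec_step_upper : n.+3 * c <= 8 * n.+2 * b.
Proof. by rewrite -(@leq_pmul2l (n.+2 ^ 2)) ?expn_gt0 //; nia. Qed.

Lemma rec_step_log_convex : b ^ 2 <= a * c.
Proof.
have le_b8a : b <= 8 * a.
  by rewrite -(@leq_pmul2l n.+2) //; apply: leq_trans upper _; nia.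
have recZ : ((n.+2 ^ 2 * c)%:R
    = (4 * (3 * n ^ 2 + 9 * n + 7) * b)%:R - (32 * n.+1 ^ 2 * a)%:R :> int)%R.
  by rewrite -rec natrD addrK.
have expand : n.+2 ^ 2 * (a * c) = n.+2 ^ 2 * b ^ 2
    + n.+2 * (b - 4 * a) * (8 * n.+1 * a - n.+2 * b) + 4 * n.+1 * a * (8 * a - b).
  apply/eqP; rewrite -(eqr_nat int) mulnCA natrM recZ.
  by rewrite !(natrD, natrM, natrX, natrB) //; apply/eqP; ring.
by rewrite -(@leq_pmul2l (n.+2 ^ 2)) ?expn_gt0 // expand -addnA leq_addr.
Qed.

End RecurrenceStep.

Lemma S_ratio_bounds n : 4 * S n <= S n.+1 /\ n.+2 * S n.+1 <= 8 * n.+1 * S n.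
Proof.
elim: n => [|n [lower upper]]; first by rewrite /S !big_nat_recr //= !big_geq.
by split; [apply: rec_step_lower (S_rec n) _ _ | apply: rec_step_upper (S_rec n) _ _].
Qed.

Lemma S_log_convex : log_convex S.
Proof.
split=> // [[|n]] // _ /=.
by have [lower upper] := S_ratio_bounds n; apply: rec_step_log_convex (S_rec n) _ _.
Qed.

Lemma log_convex_geometric_scale r a :
  log_convex a -> log_convex (fun n => r ^ n * a n).
Proof.
move=> [_ convex_a]; split=> // [[|m]] // _ /=.
have -> : r ^ m * a m * (r ^ m.+2 * a m.+2) = (r ^ m.+1) ^ 2 * (a m * a m.+2).
  by rewrite !expnS; ring.
by rewrite expnMn leq_mul // convex_a.
Qed.

Theorem corollary4p1 : log_convex S /\ log_convex P.
Proof. by split; [exact: S_log_convex | exact: log_convex_geometric_scale S_log_convex]. Qed.
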